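(* Let $\mathsf{T}$ be the algebra antihomomorphism of $U_{K,L,norm}$ (i.e. linear with $\mathsf{T}(xy)=\mathsf{T}(y)\mathsf{T}(x)$, $\mathsf{T}(\mathbf{1})=\mathbf{1}$) determined by $\mathsf{T}(K)=\overline{K}$, $\mathsf{T}(\overline{K})=K$, $\mathsf{T}(L)=\overline{L}$, $\mathsf{T}(\overline{L})=L$, $\mathsf{T}(E)=-E(\overline{K}+\overline{L})$, $\mathsf{T}(F)=-(K+L)F$. Then $\mathsf{T}$ is von Neumann regular with respect to convolution: $\mathsf{id}\star\mathsf{T}\star\mathsf{id}=\mathsf{id}$ and $\mathsf{T}\star\mathsf{id}\star\mathsf{T}=\mathsf{T}$.
   Context: Fix $q\in\mathbb{C}$, $q\neq 0,\pm1$. $U_{K,L,norm}$ is the unital associative $\mathbb{C}$-algebra generated by $K,\overline{K},L,\overline{L},E,F$ subject to $K\overline{K}K=K$, $\overline{K}K\overline{K}=\overline{K}$, $K\overline{K}=\overline{K}K$, $L\overline{L}L=L$, $\overline{L}L\overline{L}=\overline{L}$, $L\overline{L}=\overline{L}L$, $K\overline{K}+L\overline{L}=\mathbf{1}$, $KE=q^2EK$, $LE=q^2EL$, $\overline{K}E=q^{-2}E\overline{K}$, $\overline{L}E=q^{-2}E\overline{L}$, $KF=q^{-2}FK$, $LF=q^{-2}FL$, $\overline{K}F=q^2F\overline{K}$, $\overline{L}F=q^2F\overline{L}$, $EF-FE=\frac{(K+L)-(\overline{K}+\overline{L})}{q-q^{-1}}$. It is a bialgebra with the algebra homomorphisms $\Delta,\varepsilon$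 determined by $\Delta(K)=K\otimes K$, $\Delta(\overline{K})=\overline{K}\otimes\overline{K}$, $\Delta(L)=L\otimes L+L\otimes K+K\otimes L$, $\Delta(\overline{L})=\overline{L}\otimes\overline{L}+\overline{L}\otimes\overline{K}+\overline{K}\otimes\overline{L}$, $\Delta(E)=\mathbf{1}\otimes E+E\otimes(K+L)$, $\Delta(F)=F\otimes\mathbf{1}+(\overline{K}+\overline{L})\otimes F$, $\varepsilon(K)=\varepsilon(\overline{K})=1$, $\varepsilon(L)=\varepsilon(\overline{L})=\varepsilon(E)=\varepsilon(F)=0$. For linear maps $A,B$ of $U_{K,L,norm}$, the convolution is $A\star B=\mu\circ(A\otimes B)\circ\Delta$, where $\mu$ is the multiplication. *)

(* The algebra U_{K,L,norm} is built as the free associative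
   algebra on six generators (formal linear combinations of words) modulo the
   two-sided ideal generated by the defining relations. *)
From HB Require Import structures.
From mathcomp Require Import all_boot all_order all_algebra.
Set Implicit Arguments. Unset Strict Implicit. Unset Printing Implicit Defensive.
Import Order.TTheory GRing.Theory Num.Theory.
Local Open Scope ring_scope.

Inductive gen := gK | gKb | gL | gLb | gE | gF.

Definition gen_eqb (a b : gen) : bool :=
  match a, b with
  | gK, gK | gKb, gKb | gL, gL | gLb, gLb | gE, gE | gF, gF => true
  | _, _ => false
  end.

Lemma gen_eqP : Equality.axiom gen_eqb.
Proof. by do 2 case; constructor. Qed.

HB.instance Definition _ := hasDecEq.Build gen gen_eqP.

Definition word := seq gen.

Section Free.
Variable R : nzRingType.

(* an element of the free algebra: formal sum  sum_i c_i * w_i  *)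
Definition fsum := seq (R * word).
Definition fcoef (p : fsum) (w : word) : R := \sum_(cw <- p | cw.2 == w) cw.1.
Definition fscale (a : R) (p : fsum) : fsum := [seq (a * cw.1, cw.2) | cw <- p].
Definition fmul (p q : fsum) : fsum :=
  [seq (x.1 * y.1, x.2 ++ y.2) | x <- p, y <- q].
Definition fone : fsum := [:: (1, [::])].
Definition fword (w : word) : fsum := [:: (1, w)].
Definition fgen (g : gen) : fsum := fword [:: g].
Definition fsub (p q : fsum) : fsum := p ++ fscale (-1) q.
Definition fprod (ps : seq fsum) : fsum := foldr fmul fone ps.

(* elements of the free algebra tensor itself: sum_i c_i * (a_i (x) b_i) *)
Definition tsum := seq (R * word * word).
Definition tscale (a : R) (t : tsum) : tsum :=
  [seq (a * x.1.1, x.1.2, x.2) | x <- t].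
Definition tmul (s t : tsum) : tsum :=
  [seq (x.1.1 * y.1.1, x.1.2 ++ y.1.2, x.2 ++ y.2) | x <- s, y <- t].
Definition tone : tsum := [:: (1, [::], [::])].

Definition Delta_gen (g : gen) : tsum :=
  match g with
  | gK => [:: (1, [:: gK], [:: gK])]
  | gKb => [:: (1, [:: gKb], [:: gKb])]
  | gL => [:: (1, [:: gL], [:: gL]); (1, [:: gL], [:: gK]); (1, [:: gK], [:: gL])]
  | gLb => [:: (1, [:: gLb], [:: gLb]); (1, [:: gLb], [:: gKb]); (1, [:: gKb], [:: gLb])]
  | gE => [:: (1, [::], [:: gE]); (1, [:: gE], [:: gK]); (1, [:: gE], [:: gL])]
  | gF => [:: (1, [:: gF], [::]); (1, [:: gKb], [:: gF]); (1, [:: gLb], [:: gF])]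
  end.

Definition Delta_word (w : word) : tsum := foldr tmul tone (map Delta_gen w).
Definition Delta (p : fsum) : tsum :=
  flatten [seq tscale cw.1 (Delta_word cw.2) | cw <- p].

(* convolution  A * B = mu o (A (x) B) o Delta  of linear maps *)
Definition conv (A B : fsum -> fsum) (p : fsum) : fsum :=
  flatten [seq fscale t.1.1 (fmul (A (fword t.1.2)) (B (fword t.2))) | t <- Delta p].

Definition T_gen (g : gen) : fsum :=
  match g with
  | gK => fgen gKb
  | gKb => fgen gK
  | gL => fgen gLb
  | gLb => fgen gL
  | gE => [:: (-1, [:: gE; gKb]); (-1, [:: gE; gLb])]
  | gF => [:: (-1, [:: gK; gF]); (-1, [:: gL; gF])]
  end.

Definition T_word (w : word) : fsum := fprod (rev (map T_gen w)).
Definition Tmap (p : fsum) : fsum :=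
  flatten [seq fscale cw.1 (T_word cw.2) | cw <- p].

End Free.

Section Rels.
Variable R : unitRingType.
Variable q : R.

Local Notation fw := (@fword R).
Local Notation fg := (@fgen R).

(* each relation a = b is encoded by the relator a - b *)
Definition rels : seq (fsum R) := [::
  fsub (fw [:: gK; gKb; gK]) (fw [:: gK]);
  fsub (fw [:: gKb; gK; gKb]) (fw [:: gKb]);
  fsub (fw [:: gK; gKb]) (fw [:: gKb; gK]);
  fsub (fw [:: gL; gLb; gL]) (fw [:: gL]);
  fsub (fw [:: gLb; gL; gLb]) (fw [:: gLb]);
  fsub (fw [:: gL; gLb]) (fw [:: gLb; gL]);
  fsub (fw [:: gK; gKb] ++ fw [:: gL; gLb]) (fone R);
  fsub (fw [:: gK; gE]) (fscale (q ^+ 2) (fw [:: gE; gK]));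
  fsub (fw [:: gL; gE]) (fscale (q ^+ 2) (fw [:: gE; gL]));
  fsub (fw [:: gKb; gE]) (fscale (q ^- 2) (fw [:: gE; gKb]));
  fsub (fw [:: gLb; gE]) (fscale (q ^- 2) (fw [:: gE; gLb]));
  fsub (fw [:: gK; gF]) (fscale (q ^- 2) (fw [:: gF; gK]));
  fsub (fw [:: gL; gF]) (fscale (q ^- 2) (fw [:: gF; gL]));
  fsub (fw [:: gKb; gF]) (fscale (q ^+ 2) (fw [:: gF; gKb]));
  fsub (fw [:: gLb; gF]) (fscale (q ^+ 2) (fw [:: gF; gLb]));
  fsub (fsub (fw [:: gE; gF]) (fw [:: gF; gE]))
       (fscale ((q - q^-1)^-1) (fsub (fg gK ++ fg gL) (fg gKb ++ fg gLb)))
].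

Inductive in_ideal : fsum R -> Prop :=
| ideal_rel i : (i < size rels)%N -> in_ideal (nth [::] rels i)
| ideal_add p1 p2 : in_ideal p1 -> in_ideal p2 -> in_ideal (p1 ++ p2)
| ideal_mul a p b : in_ideal p -> in_ideal (fmul a (fmul p b))
| ideal_ext p p' : (forall w, fcoef p w = fcoef p' w) -> in_ideal p -> in_ideal p'.

(* equality in U_{K,L,norm} of the classes of two free elements *)
Definition Ueq (p p' : fsum R) : Prop := in_ideal (fsub p p').

End Rels.

From HB Require Import structures.
From mathcomp Require Import all_boot all_order all_algebra.
From Stdlib Require Import Setoid Morphisms.
Import GRing.Theory Num.Theory.
Local Open Scope ring_scope.
Set Implicit Arguments. Unset Strict Implicit.

(* Writing Phi = id * T and Theta = T * id, the key observation is that Phi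
   and Theta send every generator to a central idempotent of U: K, Kb go to
   e1 = K Kb, L, Lb go to e2 = L Lb, and E, F go to 0.  Since Delta is
   multiplicative, centrality on generators propagates to all words, where
   then Phi(uv) = Phi(v) Phi(u), and (id * T * id)(uv), (T * id * T)(uv) split
   as products; so both identities reduce to a finite check on the six
   generators, which uses that e1, e2 are orthogonal idempotents summing to 1
   absorbing their blocks. *)

(* Formal sums are compared coefficientwise; all algebraic laws of the free
   algebra hold only up to this equality (sums are lists, not normal forms). *)
Section FreeAlgebra.
Variable R : comNzRingType.
Implicit Types (p r s : fsum R) (a c : R) (u v : word).

Definition feq p r := forall w, fcoef p w = fcoef r w.

Lemma fcoef_cat p r w : fcoef (p ++ r) w = fcoef p w + fcoef r w.
Proof. by rewrite /fcoef big_cat. Qed.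

Lemma fcoef_nil w : fcoef ([::] : fsum R) w = 0.
Proof. by rewrite /fcoef big_nil. Qed.

Lemma fcoef_scale a p w : fcoef (fscale a p) w = a * fcoef p w.
Proof. by rewrite /fcoef big_map mulr_sumr. Qed.

Lemma fcoef_flatten (ps : seq (fsum R)) w :
  fcoef (flatten ps) w = \sum_(p <- ps) fcoef p w.
Proof.
elim: ps => [|p ps IH] /=; first by rewrite fcoef_nil big_nil.
by rewrite fcoef_cat IH big_cons.
Qed.

Lemma fscale1 p : fscale 1 p = p.
Proof. by elim: p => [|[c u] p IH] //=; rewrite mul1r IH. Qed.

Lemma fscaleA a c p : fscale a (fscale c p) = fscale (a * c) p.
Proof. by rewrite /fscale -map_comp; apply: eq_map => x /=; rewrite mulrA. Qed.

Lemma fscale_cat a p r : fscale a (p ++ r) = fscale a p ++ fscale a r.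
Proof. exact: map_cat. Qed.

Lemma fscale_flatten a (ps : seq (fsum R)) :
  fscale a (flatten ps) = flatten (map (fscale a) ps).
Proof. by elim: ps => [|p ps IH] //=; rewrite fscale_cat IH. Qed.

Lemma fsum_cons c u p : (c, u) :: p = fscale c (fword R u) ++ p.
Proof. by rewrite /fscale /= mulr1. Qed.

Lemma fmul_cons x p r :
  fmul (x :: p) r = [seq (x.1 * y.1, x.2 ++ y.2) | y <- r] ++ fmul p r.
Proof. by []. Qed.

Lemma fmul_nill p : fmul [::] p = [::].
Proof. by []. Qed.

Lemma fmul_nilr p : fmul p ([::] : fsum R) = [::].
Proof. by rewrite /fmul allpairs0r. Qed.

Lemma fmul_catl p p' r : fmul (p ++ p') r = fmul p r ++ fmul p' r.
Proof. by rewrite /fmul allpairs_cat. Qed.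

Lemma fmul_catr p r r' : feq (fmul p (r ++ r')) (fmul p r ++ fmul p r').
Proof.
move=> w; elim: p => [|x p IH] //=; rewrite !fcoef_cat IH map_cat !fcoef_cat.
by rewrite !addrA; congr (_ + _); rewrite -!addrA; congr (_ + _); rewrite addrC.
Qed.

Lemma fmul_scalel a p r : fmul (fscale a p) r = fscale a (fmul p r).
Proof.
elim: p => [|x p IH] //=; rewrite !fmul_cons IH /fscale map_cat -!map_comp.
by congr (_ ++ _); apply: eq_map => y /=; rewrite mulrA.
Qed.

Lemma fmul_scaler a p r : feq (fmul p (fscale a r)) (fscale a (fmul p r)).
Proof.
move=> w; elim: p => [|x p IH] //.
rewrite !fmul_cons fcoef_scale !fcoef_cat IH fcoef_scale mulrDr; congr (_ + _).
by rewrite /fcoef !big_map mulr_sumr; apply: eq_bigr => y _ /=; rewrite mulrCA.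
Qed.

Lemma fmul1r p : fmul (fone R) p = p.
Proof. by rewrite /fmul /= cats0; elim: p => [|[c u] p IH] //=; rewrite IH mul1r. Qed.

Lemma fmulr1 p : fmul p (fone R) = p.
Proof. by elim: p => [|[c u] p IH] //=; rewrite fmul_cons IH /= mulr1 cats0. Qed.

Lemma fmulA p r s : fmul (fmul p r) s = fmul p (fmul r s).
Proof.
have fmul_map x r' : fmul [seq (x.1 * y.1, x.2 ++ y.2) | y <- r'] s =
                      [seq (x.1 * z.1, x.2 ++ z.2) | z <- fmul r' s].
  elim: r' => [|y r' IH] //=; rewrite !fmul_cons IH !map_cat -!map_comp.
  by congr (_ ++ _); apply: eq_map => z /=; rewrite mulrA catA.
by elim: p => [|x p IH] //=; rewrite !fmul_cons fmul_catl IH fmul_map.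
Qed.

Lemma fword_cat u v : fword R (u ++ v) = fmul (fword R u) (fword R v).
Proof. by rewrite /fmul /fword /= mulr1. Qed.

Lemma fword_cons g v : fword R (g :: v) = fmul (fgen R g) (fword R v).
Proof. exact: (fword_cat [:: g] v). Qed.

Lemma Tmap_fword u : Tmap (fword R u) = T_word R u.
Proof. by rewrite /Tmap /= cats0 fscale1. Qed.

Lemma T_word_cat u v : T_word R (u ++ v) = fmul (T_word R v) (T_word R u).
Proof.
rewrite /T_word map_cat rev_cat.
elim: (rev (map _ v)) => [|x l IH] /=; first by rewrite fmul1r.
by rewrite IH fmulA.
Qed.

Lemma T_word_nil : T_word R [::] = (fone R). Proof. by []. Qed.
Lemma T_word_letter g : T_word R [:: g] = fmul (T_gen R g) (fone R). Proof. by []. Qed.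

End FreeAlgebra.

Section Congruence.
Variable R : comUnitRingType.
Variable q : R.
Implicit Types (p r s x : fsum R) (c : R).
Local Notation I := (@in_ideal R q).

Lemma ideal_nil : I [::].
Proof. exact: (@ideal_mul _ q [::] _ [::] (@ideal_rel _ q 0 isT)). Qed.

Lemma ideal_mull x p : I p -> I (fmul x p).
Proof. by move=> H; have := ideal_mul x (fone R) H; rewrite fmulr1. Qed.

Lemma ideal_mulr x p : I p -> I (fmul p x).
Proof. by move=> H; have := ideal_mul (fone R) x H; rewrite fmul1r. Qed.

Lemma ideal_scale c p : I p -> I (fscale c p).
Proof. by move/(ideal_mull [:: (c, [::])]); rewrite /fmul /= cats0. Qed.

Lemma Ueq_feq p r : feq p r -> Ueq q p r.
Proof.
move=> H; apply: (ideal_ext _ ideal_nil) => w.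
by rewrite /fsub fcoef_cat fcoef_scale H fcoef_nil mulN1r subrr.
Qed.

Lemma Ueq_refl p : Ueq q p p. Proof. exact: Ueq_feq. Qed.

Lemma Ueq_sym p r : Ueq q p r -> Ueq q r p.
Proof.
move/(ideal_scale (-1)); apply: ideal_ext => w.
by rewrite /fsub fcoef_scale !fcoef_cat !fcoef_scale !mulN1r opprD opprK addrC.
Qed.

Lemma Ueq_trans p r s : Ueq q p r -> Ueq q r s -> Ueq q p s.
Proof.
move=> H1 H2; apply: (ideal_ext _ (ideal_add H1 H2)) => w.
by rewrite /fsub !fcoef_cat !fcoef_scale !mulN1r addrA addrNK.
Qed.

Lemma Ueq_cat p p' r r' : Ueq q p p' -> Ueq q r r' -> Ueq q (p ++ r) (p' ++ r').
Proof.
move=> H1 H2; apply: (ideal_ext _ (ideal_add H1 H2)) => w.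
rewrite /fsub !fcoef_cat !fcoef_scale !fcoef_cat !mulrDr !addrA; congr (_ + _).
by rewrite -!addrA; congr (_ + _); rewrite addrC.
Qed.

Lemma Ueq_scale c p p' : Ueq q p p' -> Ueq q (fscale c p) (fscale c p').
Proof.
move/(ideal_scale c); apply: ideal_ext => w.
by rewrite /fsub !fcoef_scale !fcoef_cat !fcoef_scale mulrDr mulrCA.
Qed.

Lemma Ueq_mul p p' r r' : Ueq q p p' -> Ueq q r r' -> Ueq q (fmul p r) (fmul p' r').
Proof.
move=> H1 H2; apply: (@Ueq_trans _ (fmul p' r)).
  by move: (ideal_mulr r H1); rewrite /fsub fmul_catl fmul_scalel.
move: (ideal_mull p' H2); apply: ideal_ext => w.
by rewrite /fsub fmul_catr !fcoef_cat fmul_scaler.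
Qed.

End Congruence.

#[export] Instance Ueq_Equivalence (R : comUnitRingType) (q : R) : Equivalence (Ueq q).
Proof. split; [exact: Ueq_refl | exact: Ueq_sym | exact: Ueq_trans]. Qed.

#[export] Instance cat_Ueq_Proper (R : comUnitRingType) (q : R) :
  Proper (Ueq q ==> Ueq q ==> Ueq q) (@cat (R * word)).
Proof. by move=> ? ? ? ? ? ?; apply: Ueq_cat. Qed.

#[export] Instance fmul_Ueq_Proper (R : comUnitRingType) (q : R) :
  Proper (Ueq q ==> Ueq q ==> Ueq q) (@fmul R).
Proof. by move=> ? ? ? ? ? ?; apply: Ueq_mul. Qed.

#[export] Instance fscale_Ueq_Proper (R : comUnitRingType) (q : R) :
  Proper (eq ==> Ueq q ==> Ueq q) (@fscale R).
Proof. by move=> ? ? -> ? ? ?; apply: Ueq_scale. Qed.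

Section UeqRules.
Variable R : comUnitRingType.
Variable q : R.
Local Notation "p =~ r" := (Ueq q p r) (at level 70).
Implicit Types (p r x y : fsum R).

Lemma fmul_catR x p r : fmul x (p ++ r) =~ fmul x p ++ fmul x r.
Proof. exact/Ueq_feq/fmul_catr. Qed.

Lemma fmul_scaleR x c p : fmul x (fscale c p) =~ fscale c (fmul x p).
Proof. exact/Ueq_feq/fmul_scaler. Qed.

Lemma cat_opp x : x ++ fscale (-1) x =~ [::].
Proof. by apply: Ueq_feq => w; rewrite fcoef_cat fcoef_scale fcoef_nil mulN1r subrr. Qed.

Lemma opp_cat x : fscale (-1) x ++ x =~ [::].
Proof. by apply: Ueq_feq => w; rewrite fcoef_cat fcoef_scale fcoef_nil mulN1r addNr. Qed.

Lemma cat_cancel x y : x ++ y =~ x -> y =~ [::].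
Proof.
move=> xy; transitivity (fsub (x ++ y) x).
  by apply: Ueq_feq => w; rewrite /fsub !fcoef_cat fcoef_scale mulN1r addrAC subrr add0r.
by rewrite /fsub xy; apply: Ueq_feq => w; rewrite fcoef_cat fcoef_scale fcoef_nil mulN1r subrr.
Qed.

End UeqRules.

(* [tapp t F] applies the bilinear map (a (x) b) |-> F a b to the tensor t;
   the convolution is [conv A B p = tapp (Delta p) (fun a b => A a * B b)]. *)
Section TensorSums.
Variable R : comUnitRingType.
Variable q : R.
Local Notation "p =~ r" := (Ueq q p r) (at level 70).
Implicit Types (p x : fsum R) (s t : tsum R) (F G : word -> word -> fsum R).

Definition tapp t F : fsum R := flatten [seq fscale y.1.1 (F y.1.2 y.2) | y <- t].

Lemma tapp_cons y t F : tapp (y :: t) F = fscale y.1.1 (F y.1.2 y.2) ++ tapp t F.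
Proof. by []. Qed.

Lemma tapp_cat s t F : tapp (s ++ t) F = tapp s F ++ tapp t F.
Proof. by rewrite /tapp map_cat flatten_cat. Qed.

Lemma tapp_ext t F G : (forall a b, F a b =~ G a b) -> tapp t F =~ tapp t G.
Proof.
move=> FG; elim: t => [|y t IH]; first reflexivity.
by rewrite !tapp_cons IH FG; reflexivity.
Qed.

Lemma tapp_tone F : tapp (tone R) F = F [::] [::].
Proof. by rewrite /tapp /= cats0 fscale1. Qed.

Lemma tapp_tscale c t F : tapp (tscale c t) F = fscale c (tapp t F).
Proof.
rewrite /tapp fscale_flatten -!map_comp; congr flatten; apply: eq_map => y /=.
by rewrite fscaleA.
Qed.

Lemma fscale_tapp c t F : fscale c (tapp t F) = tapp t (fun a b => fscale c (F a b)).
Proof.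
rewrite /tapp fscale_flatten -map_comp; congr flatten; apply: eq_map => y /=.
by rewrite !fscaleA mulrC.
Qed.

Lemma fmul_tappl t F x : fmul (tapp t F) x = tapp t (fun a b => fmul (F a b) x).
Proof. by elim: t => [|y t IH] //=; rewrite !tapp_cons fmul_catl fmul_scalel IH. Qed.

Lemma fmul_tappr t F x : fmul x (tapp t F) =~ tapp t (fun a b => fmul x (F a b)).
Proof.
apply: Ueq_feq; elim: t => [|y t IH] w /=; first by rewrite /tapp /= fmul_nilr.
by rewrite !tapp_cons fmul_catr !fcoef_cat fmul_scaler IH.
Qed.

Lemma tapp_tmul s t F :
  tapp (tmul s t) F = tapp s (fun a b => tapp t (fun a' b' => F (a ++ a') (b ++ b'))).
Proof.
elim: s => [|y s IH] //=; rewrite tapp_cons -IH /tmul /= tapp_cat; congr (_ ++ _).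
rewrite fscale_tapp /tapp -map_comp; congr flatten; apply: eq_map => z /=.
by rewrite fscaleA mulrC.
Qed.

Lemma tapp_exchange s t (H : word -> word -> word -> word -> fsum R) :
  tapp s (fun a b => tapp t (fun a' b' => H a b a' b')) =~
  tapp t (fun a' b' => tapp s (fun a b => H a b a' b')).
Proof.
have fcoef_tapp t' F w :
    fcoef (tapp t' F) w = \sum_(y <- t') y.1.1 * fcoef (F y.1.2 y.2) w.
  by rewrite /tapp fcoef_flatten big_map; apply: eq_bigr => y _; rewrite fcoef_scale.
apply: Ueq_feq => w; rewrite !fcoef_tapp.
under eq_bigr => y _ do rewrite fcoef_tapp mulr_sumr.
rewrite exchange_big; apply: eq_bigr => z _; rewrite fcoef_tapp mulr_sumr.
by apply: eq_bigr => y _; rewrite mulrCA.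
Qed.

Lemma tapp_Delta_cat u v F :
  tapp (Delta_word R (u ++ v)) F =~
  tapp (Delta_word R u) (fun a b => tapp (Delta_word R v) (fun a' b' => F (a ++ a') (b ++ b'))).
Proof.
elim: u F => [|g u IH] F /=; first by rewrite tapp_tone; reflexivity.
rewrite /Delta_word /= -!/(Delta_word R _) !tapp_tmul; apply: tapp_ext => a b.
rewrite IH; apply: tapp_ext => a1 b1; apply: tapp_ext => a2 b2.
by rewrite !catA; reflexivity.
Qed.

Lemma convE A B p :
  conv A B p = tapp (Delta p) (fun a b => fmul (A (fword R a)) (B (fword R b))).
Proof. by []. Qed.

Lemma conv_word A B w :
  conv A B (fword R w) = tapp (Delta_word R w) (fun a b => fmul (A (fword R a)) (B (fword R b))).
Proof.
rewrite convE.
have -> : Delta (fword R w) = tscale 1 (Delta_word R w) by rewrite /Delta /= cats0.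
by rewrite tapp_tscale fscale1.
Qed.

Lemma conv_linear_ext A B (C : fsum R -> fsum R) :
  C [::] =~ [::] ->
  (forall c w p, C ((c, w) :: p) =~ fscale c (C (fword R w)) ++ C p) ->
  (forall w, conv A B (fword R w) =~ C (fword R w)) ->
  forall p, conv A B p =~ C p.
Proof.
move=> C0 Ccons Cw; elim=> [|[c w] p IH]; first by rewrite C0; reflexivity.
have -> : conv A B ((c, w) :: p) = fscale c (conv A B (fword R w)) ++ conv A B p.
  rewrite conv_word !convE.
  by rewrite [Delta _]/(tscale c _ ++ Delta p) tapp_cat tapp_tscale.
by rewrite Ccons Cw IH; reflexivity.
Qed.

Lemma tapp_Delta_letter g F :
  tapp (Delta_word R [:: g]) F =~ flatten [seq F y.1.2 y.2 | y <- Delta_gen R g].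
Proof.
rewrite [Delta_word _ _]/= tapp_tmul (@tapp_ext _ _ F); last first.
  by move=> a b; rewrite tapp_tone !cats0; reflexivity.
by case: g; rewrite /tapp /= !fscale1; reflexivity.
Qed.

End TensorSums.

(* When all Phi w (resp. Theta w) are central, Phi is anti-multiplicative and
   Psi multiplicative (resp. Theta and Omega behave like id and T), so the
   identities Psi w = w and Omega w = T w propagate from letters to words. *)
Section Reduction.
Variable R : comUnitRingType.
Variable q : R.
Local Notation "p =~ r" := (Ueq q p r) (at level 70).
Local Notation fw := (fword R).
Implicit Types (p r x y z : fsum R) (u v : word).

Definition central z := forall p, fmul z p =~ fmul p z.

Lemma central_Ueq z z' : z =~ z' -> central z -> central z'.
Proof. by move=> zz' Cz p; rewrite -zz'. Qed.

Lemma central_one : central (fone R).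
Proof. by move=> p; rewrite fmul1r fmulr1; reflexivity. Qed.

Lemma central_mul z z' : central z -> central z' -> central (fmul z z').
Proof.
move=> Cz Cz' p; rewrite fmulA (Cz' p) -[fmul z (fmul p z')]fmulA (Cz p) fmulA.
reflexivity.
Qed.

Lemma central_swap z x y r : central z -> fmul (fmul z x) (fmul y r) =~ fmul (fmul x y) (fmul z r).
Proof.
move=> Cz; rewrite fmulA -[fmul x (fmul y r)]fmulA -[fmul z (fmul (fmul x y) r)]fmulA.
by rewrite (Cz (fmul x y)) fmulA; reflexivity.
Qed.

Lemma central_of_gens z :
  (forall g r, fmul z (fmul (fgen R g) r) =~ fmul (fgen R g) (fmul z r)) -> central z.
Proof.
move=> Cg; have Cw u : fmul z (fw u) =~ fmul (fw u) z.
  elim: u => [|g u IH]; first by rewrite fmul1r fmulr1; reflexivity.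
  by rewrite fword_cons Cg IH fmulA; reflexivity.
elim=> [|[c u] p IH]; first by rewrite fmul_nilr; reflexivity.
rewrite fsum_cons fmul_catR fmul_catl fmul_scaleR fmul_scalel Cw IH; reflexivity.
Qed.

Definition Phi u := conv id (@Tmap R) (fw u).
Definition Psi u := conv (conv id (@Tmap R)) id (fw u).
Definition Theta u := conv (@Tmap R) id (fw u).
Definition Omega u := conv (conv (@Tmap R) id) (@Tmap R) (fw u).

Lemma PhiE v : Phi v = tapp (Delta_word R v) (fun a b => fmul (fw a) (Tmap (fw b))).
Proof. exact: conv_word. Qed.

Lemma PsiE v : Psi v = tapp (Delta_word R v) (fun a b => fmul (Phi a) (fw b)).
Proof. exact: conv_word. Qed.

Lemma ThetaE v : Theta v = tapp (Delta_word R v) (fun a b => fmul (Tmap (fw a)) (fw b)).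
Proof. exact: conv_word. Qed.

Lemma OmegaE v : Omega v = tapp (Delta_word R v) (fun a b => fmul (Theta a) (Tmap (fw b))).
Proof. exact: conv_word. Qed.

(* Phi(uv) = Phi(v) Phi(u), using T(uv) = T(v) T(u) and centrality of Phi(v). *)
Lemma Phi_cat u v : central (Phi v) -> Phi (u ++ v) =~ fmul (Phi v) (Phi u).
Proof.
move=> Cv; rewrite !PhiE tapp_Delta_cat fmul_tappr; apply: tapp_ext => a b.
rewrite (@tapp_ext _ _ _ _ (fun a' b' =>
    fmul (fw a) (fmul (fmul (fw a') (Tmap (fw b'))) (Tmap (fw b))))); last first.
  by move=> a' b'; rewrite /= !Tmap_fword fword_cat T_word_cat !fmulA; reflexivity.
rewrite -fmul_tappr -fmul_tappl -PhiE -fmulA -(Cv (fw a)) fmulA; reflexivity.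
Qed.

Lemma Phi_nil : Phi [::] =~ fone R.
Proof. by rewrite PhiE tapp_tone Tmap_fword fmul1r; reflexivity. Qed.

Lemma Phi_central : (forall g, central (Phi [:: g])) -> forall w, central (Phi w).
Proof.
move=> Cg; elim=> [|g w IH]; first exact: (central_Ueq (Ueq_sym Phi_nil) central_one).
exact: (central_Ueq (Ueq_sym (Phi_cat [:: g] IH)) (central_mul IH (Cg g))).
Qed.

Lemma Psi_cat : (forall w, central (Phi w)) -> forall u v, Psi (u ++ v) =~ fmul (Psi u) (Psi v).
Proof.
move=> CPhi u v; rewrite !PsiE tapp_Delta_cat fmul_tappl; apply: tapp_ext => a b.
rewrite fmul_tappr; apply: tapp_ext => a' b'.
by rewrite (Phi_cat a (CPhi a')) fword_cat (central_swap _ _ _ (CPhi a')); reflexivity.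
Qed.

Lemma Psi_word : (forall w, central (Phi w)) -> (forall g, Psi [:: g] =~ fw [:: g]) ->
  forall w, Psi w =~ fw w.
Proof.
move=> CPhi Pg; elim=> [|g w IH].
  by rewrite PsiE tapp_tone Phi_nil fmul1r; reflexivity.
by rewrite -cat1s (Psi_cat CPhi) Pg IH fword_cat; reflexivity.
Qed.

(* Theta(uv) = Theta(u) Theta(v) when Theta(u) is central (exchanging sums). *)
Lemma Theta_cat u v : central (Theta u) -> Theta (u ++ v) =~ fmul (Theta u) (Theta v).
Proof.
move=> Cu; rewrite !ThetaE tapp_Delta_cat.
rewrite (@tapp_ext _ _ _ _ (fun a b => tapp _ (fun a' b' =>
    fmul (Tmap (fw a')) (fmul (fmul (Tmap (fw a)) (fw b)) (fw b'))))); last first.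
  move=> a b; apply: tapp_ext => a' b'.
  by rewrite !Tmap_fword fword_cat T_word_cat !fmulA; reflexivity.
rewrite tapp_exchange fmul_tappr; apply: tapp_ext => a' b'.
rewrite -fmul_tappr -fmul_tappl -ThetaE -fmulA -(Cu (Tmap (fw a'))) fmulA.
reflexivity.
Qed.

Lemma Theta_nil : Theta [::] =~ fone R.
Proof. by rewrite ThetaE tapp_tone Tmap_fword fmul1r; reflexivity. Qed.

Lemma Theta_central : (forall g, central (Theta [:: g])) -> forall w, central (Theta w).
Proof.
move=> Cg; elim=> [|g w IH]; first exact: (central_Ueq (Ueq_sym Theta_nil) central_one).
exact: (central_Ueq (Ueq_sym (Theta_cat w (Cg g))) (central_mul (Cg g) IH)).
Qed.

Lemma Omega_word : (forall w, central (Theta w)) ->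
  (forall g, Omega [:: g] =~ Tmap (fw [:: g])) -> forall w, Omega w =~ Tmap (fw w).
Proof.
move=> CTheta Og; elim=> [|g w IH].
  by rewrite OmegaE tapp_tone Theta_nil fmul1r; reflexivity.
rewrite -cat1s OmegaE tapp_Delta_cat.
rewrite (@tapp_ext _ _ _ _ (fun a b =>
    fmul (Tmap (fw w)) (fmul (Theta a) (Tmap (fw b))))); last first.
  move=> a b; rewrite (@tapp_ext _ _ _ _ (fun a' b' =>
      fmul (Theta a) (fmul (fmul (Theta a') (Tmap (fw b'))) (Tmap (fw b))))); last first.
    by move=> a' b'; rewrite (Theta_cat a' (CTheta a)) !Tmap_fword
      T_word_cat !fmulA; reflexivity.
  rewrite -fmul_tappr -fmul_tappl -OmegaE IH -fmulA (CTheta a (Tmap (fw w))) fmulA.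
  reflexivity.
by rewrite -fmul_tappr -OmegaE Og !Tmap_fword T_word_cat; reflexivity.
Qed.

Lemma conv_id_T_id : (forall g, central (Phi [:: g])) -> (forall g, Psi [:: g] =~ fw [:: g]) ->
  forall p, conv (conv id (@Tmap R)) id p =~ p.
Proof.
move=> CPhi Pg; apply: conv_linear_ext => [|c w p|w]; first reflexivity.
  by rewrite fsum_cons; reflexivity.
exact: (Psi_word (Phi_central CPhi) Pg).
Qed.

Lemma conv_T_id_T : (forall g, central (Theta [:: g])) ->
  (forall g, Omega [:: g] =~ Tmap (fw [:: g])) ->
  forall p, conv (conv (@Tmap R) id) (@Tmap R) p =~ Tmap p.
Proof.
move=> CTheta Og; apply: conv_linear_ext => [|c w p|w]; first reflexivity.
  by rewrite Tmap_fword; reflexivity.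
exact: (Omega_word (Theta_central CTheta) Og).
Qed.

End Reduction.

Section Relations.
Variable R : fieldType.
Variable q : R.
Hypothesis q_neq0 : q != 0.
Local Notation "p =~ r" := (Ueq q p r) (at level 70).
Local Notation fw := (fword R).
Local Notation GK := (fgen R gK).
Local Notation GKb := (fgen R gKb).
Local Notation GL := (fgen R gL).
Local Notation GLb := (fgen R gLb).
Local Notation GE := (fgen R gE).
Local Notation GF := (fgen R gF).
Local Notation one := (fone R).
Implicit Types (r : fsum R) (g h : gen).

Lemma relator_mul i a b r :
  (i < size (rels q))%N -> nth [::] (rels q) i = fsub a b -> fmul a r =~ fmul b r.
Proof.
move=> i_lt rel_i; apply: Ueq_mul; last reflexivity.
by rewrite /Ueq -rel_i; apply: ideal_rel.
Qed.

Ltac nest := rewrite ?fword_cons ?fmulA ?fmul1r.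

Lemma K_Kb_K r : fmul GK (fmul GKb (fmul GK r)) =~ fmul GK r.
Proof. by have := relator_mul (i := 0) r isT erefl; rewrite ?fmul_scalel; nest. Qed.

Lemma Kb_K_Kb r : fmul GKb (fmul GK (fmul GKb r)) =~ fmul GKb r.
Proof. by have := relator_mul (i := 1) r isT erefl; rewrite ?fmul_scalel; nest. Qed.

Lemma K_Kb_comm r : fmul GK (fmul GKb r) =~ fmul GKb (fmul GK r).
Proof. by have := relator_mul (i := 2) r isT erefl; rewrite ?fmul_scalel; nest. Qed.

Lemma L_Lb_L r : fmul GL (fmul GLb (fmul GL r)) =~ fmul GL r.
Proof. by have := relator_mul (i := 3) r isT erefl; rewrite ?fmul_scalel; nest. Qed.

Lemma Lb_L_Lb r : fmul GLb (fmul GL (fmul GLb r)) =~ fmul GLb r.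
Proof. by have := relator_mul (i := 4) r isT erefl; rewrite ?fmul_scalel; nest. Qed.

Lemma L_Lb_comm r : fmul GL (fmul GLb r) =~ fmul GLb (fmul GL r).
Proof. by have := relator_mul (i := 5) r isT erefl; rewrite ?fmul_scalel; nest. Qed.

Lemma idempotents_sum r : fmul GK (fmul GKb r) ++ fmul GL (fmul GLb r) =~ r.
Proof.
by have := relator_mul (i := 6) r isT erefl; rewrite fmul_catl fmul1r; nest.
Qed.

Lemma K_E r : fmul GK (fmul GE r) =~ fscale (q ^+ 2) (fmul GE (fmul GK r)).
Proof. by have := relator_mul (i := 7) r isT erefl; rewrite ?fmul_scalel; nest. Qed.

Lemma L_E r : fmul GL (fmul GE r) =~ fscale (q ^+ 2) (fmul GE (fmul GL r)).
Proof. by have := relator_mul (i := 8) r isT erefl; rewrite ?fmul_scalel; nest. Qed.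

Lemma Kb_E r : fmul GKb (fmul GE r) =~ fscale (q ^- 2) (fmul GE (fmul GKb r)).
Proof. by have := relator_mul (i := 9) r isT erefl; rewrite ?fmul_scalel; nest. Qed.

Lemma Lb_E r : fmul GLb (fmul GE r) =~ fscale (q ^- 2) (fmul GE (fmul GLb r)).
Proof. by have := relator_mul (i := 10) r isT erefl; rewrite ?fmul_scalel; nest. Qed.

Lemma K_F r : fmul GK (fmul GF r) =~ fscale (q ^- 2) (fmul GF (fmul GK r)).
Proof. by have := relator_mul (i := 11) r isT erefl; rewrite ?fmul_scalel; nest. Qed.

Lemma L_F r : fmul GL (fmul GF r) =~ fscale (q ^- 2) (fmul GF (fmul GL r)).
Proof. by have := relator_mul (i := 12) r isT erefl; rewrite ?fmul_scalel; nest. Qed.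

Lemma Kb_F r : fmul GKb (fmul GF r) =~ fscale (q ^+ 2) (fmul GF (fmul GKb r)).
Proof. by have := relator_mul (i := 13) r isT erefl; rewrite ?fmul_scalel; nest. Qed.

Lemma Lb_F r : fmul GLb (fmul GF r) =~ fscale (q ^+ 2) (fmul GF (fmul GLb r)).
Proof. by have := relator_mul (i := 14) r isT erefl; rewrite ?fmul_scalel; nest. Qed.

Lemma idempotents_sum' r : fmul GL (fmul GLb r) ++ fmul GK (fmul GKb r) =~ r.
Proof.
by rewrite -[X in _ =~ X]idempotents_sum; apply: Ueq_feq => w; rewrite !fcoef_cat addrC.
Qed.

Definition in_K_block g := (g == gK) || (g == gKb).
Definition in_L_block g := (g == gL) || (g == gLb).

Lemma K_block_e1 g r : in_K_block g -> fmul (fgen R g) (fmul GK (fmul GKb r)) =~ fmul (fgen R g) r.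
Proof.
case: g => // _; last by rewrite Kb_K_Kb; reflexivity.
by rewrite K_Kb_comm K_Kb_K; reflexivity.
Qed.

Lemma e1_K_block g r : in_K_block g -> fmul GK (fmul GKb (fmul (fgen R g) r)) =~ fmul (fgen R g) r.
Proof.
case: g => // _; first by rewrite K_Kb_K; reflexivity.
by rewrite K_Kb_comm Kb_K_Kb; reflexivity.
Qed.

Lemma L_block_e2 g r : in_L_block g -> fmul (fgen R g) (fmul GL (fmul GLb r)) =~ fmul (fgen R g) r.
Proof.
case: g => // _; last by rewrite Lb_L_Lb; reflexivity.
by rewrite L_Lb_comm L_Lb_L; reflexivity.
Qed.

Lemma e2_L_block g r : in_L_block g -> fmul GL (fmul GLb (fmul (fgen R g) r)) =~ fmul (fgen R g) r.
Proof.
case: g => // _; first by rewrite L_Lb_L; reflexivity.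
by rewrite L_Lb_comm Lb_L_Lb; reflexivity.
Qed.

Lemma e1_e2 r : fmul GK (fmul GKb (fmul GL (fmul GLb r))) =~ [::].
Proof.
apply: (@cat_cancel _ q (fmul GK (fmul GKb r))).
rewrite -{1}(e1_K_block (fmul GKb r) (g := gK) isT) -!fmul_catR idempotents_sum.
reflexivity.
Qed.

Lemma e2_e1 r : fmul GL (fmul GLb (fmul GK (fmul GKb r))) =~ [::].
Proof.
apply: (@cat_cancel _ q (fmul GL (fmul GLb r))).
rewrite -{1}(e2_L_block (fmul GLb r) (g := gL) isT) -!fmul_catR idempotents_sum'.
reflexivity.
Qed.

Lemma K_L_vanish g h r : in_K_block g -> in_L_block h ->
  fmul (fgen R g) (fmul (fgen R h) r) =~ [::].
Proof.
move=> Kg Lh; rewrite -(K_block_e1 _ Kg) -(e2_L_block r Lh) e1_e2 fmul_nilr.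
reflexivity.
Qed.

Lemma L_K_vanish g h r : in_L_block g -> in_K_block h ->
  fmul (fgen R g) (fmul (fgen R h) r) =~ [::].
Proof.
move=> Lg Kh; rewrite -(L_block_e2 _ Lg) -(e1_K_block r Kh) e2_e1 fmul_nilr.
reflexivity.
Qed.

Definition e1 : fsum R := fw [:: gK; gKb].
Definition e2 : fsum R := fw [:: gL; gLb].

Lemma e1_mul r : fmul e1 r = fmul GK (fmul GKb r).
Proof. by rewrite /e1; nest. Qed.

Lemma e2_mul r : fmul e2 r = fmul GL (fmul GLb r).
Proof. by rewrite /e2; nest. Qed.

(* e1 and e2 are central; for E and F this uses q^2 q^-2 = 1. *)
Lemma central_e1 : central q e1.
Proof.
apply: central_of_gens => g r; rewrite !e1_mul.
case: g.
- by rewrite (e1_K_block _ (g := gK)) // (K_block_e1 _ (g := gK)) //; reflexivity.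
- by rewrite (e1_K_block _ (g := gKb)) // (K_block_e1 _ (g := gKb)) //; reflexivity.
- by rewrite (K_L_vanish _ (g := gKb) (h := gL)) // (L_K_vanish _ (g := gL) (h := gK)) //
     fmul_nilr; reflexivity.
- by rewrite (K_L_vanish _ (g := gKb) (h := gLb)) // (L_K_vanish _ (g := gLb) (h := gK)) //
     fmul_nilr; reflexivity.
- rewrite Kb_E fmul_scaleR K_E fscaleA.
  by rewrite (mulVf (expf_neq0 2 q_neq0)) fscale1; reflexivity.
- rewrite Kb_F fmul_scaleR K_F fscaleA.
  by rewrite (mulfV (expf_neq0 2 q_neq0)) fscale1; reflexivity.
Qed.

Lemma central_e2 : central q e2.
Proof.
apply: central_of_gens => g r; rewrite !e2_mul.
case: g.
- by rewrite (L_K_vanish _ (g := gLb) (h := gK)) // (K_L_vanish _ (g := gK) (h := gL)) //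
     fmul_nilr; reflexivity.
- by rewrite (L_K_vanish _ (g := gLb) (h := gKb)) // (K_L_vanish _ (g := gKb) (h := gL)) //
     fmul_nilr; reflexivity.
- by rewrite (e2_L_block _ (g := gL)) // (L_block_e2 _ (g := gL)) //; reflexivity.
- by rewrite (e2_L_block _ (g := gLb)) // (L_block_e2 _ (g := gLb)) //; reflexivity.
- rewrite Lb_E fmul_scaleR L_E fscaleA.
  by rewrite (mulVf (expf_neq0 2 q_neq0)) fscale1; reflexivity.
- rewrite Lb_F fmul_scaleR L_F fscaleA.
  by rewrite (mulfV (expf_neq0 2 q_neq0)) fscale1; reflexivity.
Qed.

Definition block_idem g : fsum R :=
  match g with gK | gKb => e1 | gL | gLb => e2 | gE | gF => [::] end.

Lemma central_block_idem g : central q (block_idem g).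
Proof.
case: g; rewrite /block_idem; try exact: central_e1; try exact: central_e2.
all: by move=> p; rewrite fmul_nilr; reflexivity.
Qed.

Lemma e1_nest : e1 = fmul GK (fmul GKb one). Proof. by rewrite -e1_mul fmulr1. Qed.
Lemma e2_nest : e2 = fmul GL (fmul GLb one). Proof. by rewrite -e2_mul fmulr1. Qed.

Lemma Tmap_E : Tmap (fw [:: gE]) = fscale (-1) (fmul GE (fmul GKb one) ++ fmul GE (fmul GLb one)).
Proof. by rewrite /Tmap /fscale /= !mulr1 !mul1r. Qed.
Lemma Tmap_F : Tmap (fw [:: gF]) = fscale (-1) (fmul GK (fmul GF one) ++ fmul GL (fmul GF one)).
Proof. by rewrite /Tmap /fscale /= !mulr1 !mul1r. Qed.
Lemma Tmap_E_mul r :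
  fmul (Tmap (fw [:: gE])) r = fscale (-1) (fmul GE (fmul GKb r) ++ fmul GE (fmul GLb r)).
Proof. by rewrite Tmap_E fmul_scalel fmul_catl !fmulA !fmul1r. Qed.
Lemma Tmap_F_mul r :
  fmul (Tmap (fw [:: gF])) r = fscale (-1) (fmul GK (fmul GF r) ++ fmul GL (fmul GF r)).
Proof. by rewrite Tmap_F fmul_scalel fmul_catl !fmulA !fmul1r. Qed.
Lemma Phi_gen g : Phi R [:: g] =~ block_idem g.
Proof.
rewrite PhiE tapp_Delta_letter.
case: g; cbn [Delta_gen map flatten foldr fst snd block_idem].
all: rewrite ?cats0 ?Tmap_E ?Tmap_F !Tmap_fword ?T_word_nil ?T_word_letter; cbn [T_gen].
all: nest; rewrite ?e1_nest ?e2_nest.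
- reflexivity.
- by rewrite K_Kb_comm; reflexivity.
- rewrite (L_K_vanish _ (g := gL) (h := gKb)) // (K_L_vanish _ (g := gK) (h := gLb)) //.
  by rewrite !cats0; reflexivity.
- rewrite (L_K_vanish _ (g := gLb) (h := gK)) // (K_L_vanish _ (g := gKb) (h := gL)) //.
  by rewrite !cats0 L_Lb_comm; reflexivity.
- by rewrite opp_cat; reflexivity.
- rewrite (fmul_scaleR q GKb) (fmul_scaleR q GLb) (fmul_catR q GKb) (fmul_catR q GLb).
  rewrite (K_L_vanish _ (g := gKb) (h := gL)) // (L_K_vanish _ (g := gLb) (h := gK)) //.
  rewrite cats0 cat0s -K_Kb_comm -L_Lb_comm -fscale_cat idempotents_sum.
  by rewrite cat_opp; reflexivity.
Qed.

Lemma Theta_gen g : Theta R [:: g] =~ block_idem g.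
Proof.
rewrite ThetaE tapp_Delta_letter.
case: g; cbn [Delta_gen map flatten foldr fst snd block_idem].
all: rewrite ?cats0 ?Tmap_E_mul ?Tmap_F_mul !Tmap_fword ?T_word_nil ?T_word_letter; cbn [T_gen].
all: nest; rewrite ?e1_nest ?e2_nest.
- by rewrite K_Kb_comm; reflexivity.
- reflexivity.
- rewrite (L_K_vanish _ (g := gLb) (h := gK)) // (K_L_vanish _ (g := gKb) (h := gL)) //.
  by rewrite !cats0 L_Lb_comm; reflexivity.
- rewrite (L_K_vanish _ (g := gL) (h := gKb)) // (K_L_vanish _ (g := gK) (h := gLb)) //.
  by rewrite !cats0; reflexivity.
- rewrite (L_K_vanish _ (g := gLb) (h := gK)) // (K_L_vanish _ (g := gKb) (h := gL)) //.
  rewrite !fmul_nilr cats0 cat0s -K_Kb_comm -L_Lb_comm -fscale_cat -(fmul_catR q GE).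
  by rewrite idempotents_sum cat_opp; reflexivity.
- by rewrite opp_cat; reflexivity.
Qed.

Lemma Psi_gen g : Psi R [:: g] =~ fw [:: g].
Proof.
rewrite PsiE tapp_Delta_letter.
case: g; cbn [Delta_gen map flatten foldr fst snd].
all: rewrite ?cats0 ?Phi_nil !Phi_gen; cbn [block_idem].
all: rewrite ?e1_mul ?e2_mul; nest.
- by rewrite (e1_K_block _ (g := gK)) //; reflexivity.
- by rewrite (e1_K_block _ (g := gKb)) //; reflexivity.
- rewrite (e2_L_block _ (g := gL)) // (L_K_vanish _ (g := gLb) (h := gK)) //.
  by rewrite (K_L_vanish _ (g := gKb) (h := gL)) // !fmul_nilr !cats0; reflexivity.
- rewrite (e2_L_block _ (g := gLb)) // (L_K_vanish _ (g := gLb) (h := gKb)) //.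
  by rewrite (K_L_vanish _ (g := gKb) (h := gLb)) // !fmul_nilr !cats0; reflexivity.
- by rewrite !fmul_nill !cats0; reflexivity.
- by rewrite fmul_nill cat0s idempotents_sum; reflexivity.
Qed.

Lemma Omega_gen g : Omega R [:: g] =~ Tmap (fw [:: g]).
Proof.
rewrite OmegaE tapp_Delta_letter.
case: g; cbn [Delta_gen map flatten foldr fst snd].
all: rewrite ?cats0 ?Theta_nil !Theta_gen; cbn [block_idem].
all: rewrite ?e1_mul ?e2_mul ?fmul_nill ?cat0s.
5: by rewrite fmul1r cats0; reflexivity.
5: by rewrite idempotents_sum; reflexivity.
all: rewrite !Tmap_fword !T_word_letter; cbn [T_gen].
- by rewrite (e1_K_block _ (g := gKb)) //; reflexivity.
- by rewrite (e1_K_block _ (g := gK)) //; reflexivity.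
- rewrite (e2_L_block _ (g := gLb)) // (L_K_vanish _ (g := gLb) (h := gKb)) //.
  by rewrite (K_L_vanish _ (g := gKb) (h := gLb)) // !fmul_nilr !cats0; reflexivity.
- rewrite (e2_L_block _ (g := gL)) // (L_K_vanish _ (g := gLb) (h := gK)) //.
  by rewrite (K_L_vanish _ (g := gKb) (h := gL)) // !fmul_nilr !cats0; reflexivity.
Qed.

End Relations.

Theorem proposition9 (R : numClosedFieldType) (q : R)
  (hq0 : q != 0) (hq1 : q != 1) (hqm1 : q != -1) :
  (forall p : fsum R, Ueq q (conv (conv id (@Tmap R)) id p) p) /\
  (forall p : fsum R, Ueq q (conv (conv (@Tmap R) id) (@Tmap R) p) (Tmap p)).
Proof.
have CPhi g : central q (Phi R [:: g]).
  exact: central_Ueq (Ueq_sym (Phi_gen q g)) (central_block_idem hq0 g).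
have CTheta g : central q (Theta R [:: g]).
  exact: central_Ueq (Ueq_sym (Theta_gen q g)) (central_block_idem hq0 g).
split.
- exact: conv_id_T_id CPhi (Psi_gen q).
- exact: conv_T_id_T CTheta (Omega_gen q).
Qed.
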